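(* Let $G$ be a finite group. Then $G$ is an elementary abelian $3$-group if and only if all of the following hold: (a) for every maximal subgroup $M$ of $G$, the non-trivial cosets of $M$ in $G$ are exactly two sets, and each of them is a maximal sum-free set in $G$; (b) every maximal sum-free set in $G$ is a non-trivial coset of some maximal subgroup of $G$; (c) $\Phi(G)=1$, where $\Phi(G)$ denotes the Frattini subgroup of $G$ (the intersection of all maximal subgroups of $G$).
   Context: A non-empty subset $S$ of a group $G$ is called sum-free if for all $s_1,s_2\in S$ (including the case $s_1=s_2$) one has $s_1s_2\notin S$. A maximal sum-free set in a finite group $G$ means a sum-free set of largest possible cardinality among all sum-free sets in $G$ (maximal by cardinality). A non-trivial coset of a subgroup $H$ is a coset $gH$ with $g\notin H$. *)

From mathcomp Require Import all_boot all_fingroup all_solvable.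
Set Implicit Arguments. Unset Strict Implicit. Unset Printing Implicit Defensive.
Local Open Scope group_scope.

Section SumFree.
Variable gT : finGroupType.

Definition sum_free (G S : {set gT}) : bool :=
  [&& S != set0, S \subset G &
      [forall s1 in S, forall s2 in S, s1 * s2 \notin S]].

Definition max_sum_free (G S : {set gT}) : bool :=
  sum_free G S && [forall T : {set gT}, sum_free G T ==> (#|T| <= #|S|)].

Definition nontriv_cosets (M G : {set gT}) : {set {set gT}} :=
  [set x *: M | x in G :\: M].

End SumFree.

From mathcomp Require Import all_boot all_fingroup all_solvable.
Set Implicit Arguments. Unset Strict Implicit. Unset Printing Implicit Defensive.
Local Open Scope group_scope.

(* In an elementary abelian 3-group G every element s of a sum-free set S has
   order 3, and a * s, a * s^2 leave S for a in S; so distinct elements of S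
   lie in distinct cosets of <s> and |S| <= |G|/3.  The non-trivial cosets of
   a maximal subgroup (of index 3) attain this bound.  A sum-free S attaining
   it meets every coset of <s>, which forces (x y)^-1 in S for x, y in S;
   hence s^-1 S is a subgroup of index 3 not containing s.  Conversely, if
   every maximal subgroup has index 3 then a Sylow 3-subgroup lies in no
   maximal subgroup, so G is a 3-group, and a 3-group with trivial Frattini
   subgroup is elementary abelian. *)

Section SumFree.
Variable gT : finGroupType.
Implicit Types (G M : {group gT}) (S : {set gT}).

Lemma sum_free_sub (G : {set gT}) S : sum_free G S -> S \subset G.
Proof. by case/and3P. Qed.

Lemma sum_free_mul (G : {set gT}) S a b :
  sum_free G S -> a \in S -> b \in S -> a * b \notin S.
Proof. by case/and3P=> _ _ /forall_inP sfS aS; move/forall_inP: (sfS a aS); apply. Qed.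

Lemma sum_free_neq1 (G : {set gT}) S s : sum_free G S -> s \in S -> s != 1.
Proof.
by move=> sfS sS; apply: contraNneq (sum_free_mul sfS sS sS) => s1; rewrite {1}s1 mul1g.
Qed.

Lemma nontriv_cosetsE M G :
  M \subset G -> nontriv_cosets M G = lcosets M G :\ (M : {set gT}).
Proof.
move=> sMG; apply/setP=> C; rewrite !inE.
apply/imsetP/andP => [[x /setDP[xG xM] ->] | [CM /lcosetsP[x xG defC]]].
  split; last by apply/lcosetsP; exists x.
  by apply: contraNneq xM => <-; apply: lcoset_refl.
exists x => //.
by rewrite inE xG andbT; apply: contraNN CM => xM; rewrite defC lcoset_id.
Qed.

Lemma card_nontriv_cosets M G :
  M \subset G -> #|nontriv_cosets M G| = #|G : M|.-1.
Proof.
move=> sMG; rewrite nontriv_cosetsE // cardsD -card_lcosets -subn1.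
suff /setIidPr-> : [set (M : {set gT})] \subset lcosets M G by rewrite cards1.
by rewrite sub1set; apply/lcosetsP; exists 1; rewrite ?lcoset1.
Qed.

Lemma nontriv_coset_sum_free M G C :
  M \subset G -> C \in nontriv_cosets M G -> sum_free G C.
Proof.
move=> sMG /imsetP[x /setDP[xG xM] ->]; apply/and3P; split.
- by apply/set0Pn; exists x; apply: lcoset_refl.
- by apply/subsetP=> _ /lcosetP[m mM ->]; rewrite groupM // (subsetP sMG).
apply/forall_inP=> _ /lcosetP[m1 m1M ->]; apply/forall_inP=> _ /lcosetP[m2 m2M ->].
rewrite mem_lcoset -!mulgA mulKg; apply: contra xM => m1xm2M.
have := groupM (groupM (groupVr m1M) m1xm2M) (groupVr m2M).
by rewrite mulKg mulgK.
Qed.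

(* If b = a s^k with a, b, s in S, then k = 1 puts a * s in S and k = 2 puts
   b * s = a in S. *)
Lemma sum_free_lcoset_cycle_inj (G : {set gT}) S s :
  sum_free G S -> s \in S -> #[s] = 3 ->
  {in S &, injective (fun x => x *: <[s]>)}.
Proof.
move=> sfS sS os a b aS bS /= eab.
have /lcosetP[_ /cycleP[k ->] def_b] : b \in a *: <[s]> by rewrite eab lcoset_refl.
move: bS; rewrite def_b -expg_mod_order os.
have : (k %% 3 < 3)%N by rewrite ltn_mod.
case: (k %% 3)%N => [|[|[|//]]] _; first by rewrite mulg1.
  by move=> asS; case/negP: (sum_free_mul sfS aS sS).
move=> as2S; case/negP: (sum_free_mul sfS as2S sS).
by rewrite -mulgA -expgSr -os expg_order mulg1.
Qed.

Lemma sum_free_card_le_index G S s :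
  sum_free G S -> s \in S -> #[s] = 3 -> #|S| <= #|G : <[s]>|.
Proof.
move=> sfS sS os; rewrite -(card_in_imset (sum_free_lcoset_cycle_inj sfS sS os)).
rewrite -card_lcosets; apply/subset_leq_card/subsetP=> _ /imsetP[x xS ->].
by apply/lcosetsP; exists x; rewrite ?(subsetP (sum_free_sub sfS)).
Qed.

End SumFree.

Section ElementaryAbelian3.
Variables (gT : finGroupType) (G : {group gT}).
Hypothesis abG : 3.-abelem G.
Implicit Types (M : {group gT}) (S : {set gT}).

Let expgV2 x : x \in G -> x ^+ 2 = x^-1.
Proof.
case/(abelemP (isT : prime 3)): abG => _ x3G xG.
by apply/esym/eqP; rewrite eq_invg_mul -expgS x3G.
Qed.

Lemma sum_free_order3 S s : sum_free G S -> s \in S -> #[s] = 3.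
Proof.
move=> sfS sS; apply: abelem_order_p abG _ (sum_free_neq1 sfS sS).
exact: subsetP (sum_free_sub sfS) s sS.
Qed.

Lemma sum_free_card_le S : sum_free G S -> (3 * #|S| <= #|G|)%N.
Proof.
move=> sfS; have [/set0Pn[s sS] _ _] := and3P sfS.
have os := sum_free_order3 sfS sS.
have sG : <[s]> \subset G by rewrite cycle_subG (subsetP (sum_free_sub sfS)).
by rewrite -(Lagrange sG) -orderE os leq_mul2l sum_free_card_le_index.
Qed.

Lemma card_maximal M : maximal M G -> (3 * #|M|)%N = #|G|.
Proof.
move=> maxM; rewrite -(Lagrange (proper_sub (maxgroupp maxM))) mulnC.
by rewrite (p_maximal_index (abelem_pgroup abG) maxM).
Qed.

Lemma nontriv_coset_max_sum_free M C :
  maximal M G -> C \in nontriv_cosets M G -> max_sum_free G C.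
Proof.
move=> maxM CM; have sMG := proper_sub (maxgroupp maxM).
have sfC := nontriv_coset_sum_free sMG CM.
rewrite /max_sum_free sfC; apply/forall_inP=> T sfT.
have /imsetP[x _ ->] := CM.
by rewrite card_lcoset -(leq_pmul2l (isT : 0 < 3)) card_maximal ?sum_free_card_le.
Qed.

Lemma max_sum_free_card S : max_sum_free G S -> (3 * #|S|)%N = #|G|.
Proof.
case/andP=> sfS /forall_inP maxS; apply/eqP; rewrite eqn_leq sum_free_card_le //=.
have [/set0Pn[s sS] _ _] := and3P sfS.
have [G1 | [M maxM _]] := maximal_exists (sub1G G).
  by move: (subsetP (sum_free_sub sfS) s sS) (sum_free_neq1 sfS sS); rewrite -G1 inE => ->.
have [sMG [x xG xM]] := properP (maxgroupp maxM).
have xMC : x *: M \in nontriv_cosets M G by apply/imsetP; exists x; rewrite ?inE ?xM.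
have := maxS _ (nontriv_coset_sum_free sMG xMC).
by rewrite card_lcoset -(card_maximal maxM) leq_pmul2l.
Qed.

Section LargeSumFree.
Variable S : {set gT}.
Hypotheses (sfS : sum_free G S) (cardS : (3 * #|S|)%N = #|G|).

Let S_G : {subset S <= G}.
Proof. exact/subsetP/(sum_free_sub sfS). Qed.

Lemma large_sum_free_meets_lcoset s a :
  s \in S -> a \in G -> exists2 t, t \in S & t \in a *: <[s]>.
Proof.
move=> sS aG; have os := sum_free_order3 sfS sS.
have sG : <[s]> \subset G by rewrite cycle_subG S_G.
have injS := sum_free_lcoset_cycle_inj sfS sS os.
have sSG : [set x *: <[s]> | x in S] \subset lcosets <[s]> G.
  by apply/subsetP=> _ /imsetP[x xS ->]; apply/lcosetsP; exists x; rewrite ?S_G.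
have : a *: <[s]> \in lcosets <[s]> G by apply/lcosetsP; exists a.
have /eqP <- : [set x *: <[s]> | x in S] == lcosets <[s]> G.
  rewrite eqEcard sSG card_lcosets (card_in_imset injS) -(leq_pmul2l (isT : 0 < 3)).
  by rewrite cardS -(Lagrange sG) /= -orderE os.
by case/imsetP=> t tS ->; exists t; rewrite ?lcoset_refl.
Qed.

(* The coset (x y)^-1 <x> meets S in some y^-1 x^(k-1); k = 1 would give
   y^-1 = y * y in S, and k = 2 would give y * (y^-1 x) = x in S. *)
Lemma large_sum_free_invM x y : x \in S -> y \in S -> (x * y)^-1 \in S.
Proof.
move=> xS yS; have os := sum_free_order3 sfS xS.
have [t tS /lcosetP[_ /cycleP[k ->] def_t]] :=
  large_sum_free_meets_lcoset xS (groupVr (groupM (S_G xS) (S_G yS))).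
move: tS; rewrite def_t -expg_mod_order os invMg.
have : (k %% 3 < 3)%N by rewrite ltn_mod.
case: (k %% 3)%N => [|[|[|//]]] _; first by rewrite mulg1.
  rewrite expg1 mulgKV -expgV2 ?S_G // => y2S.
  by case/negP: (sum_free_mul sfS yS yS).
rewrite -mulgA mulKg => yVxS; case/negP: (sum_free_mul sfS yS yVxS).
by rewrite mulKVg.
Qed.

Lemma large_sum_free_mulV a b c :
  a \in S -> b \in S -> c \in S -> c^-1 * (a * b) \in S.
Proof.
move=> aS bS cS; have abVS := large_sum_free_invM aS bS.
by have := large_sum_free_invM abVS cS; rewrite invMg invgK.
Qed.

Lemma large_sum_free_group_set s : s \in S -> group_set (s^-1 *: S).
Proof.
move=> sS; apply/group_setP; split; first by rewrite mem_lcoset invgK mulg1.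
move=> _ _ /lcosetP[a aS ->] /lcosetP[b bS ->].
have cSG := centsP (abelem_abelian abG).
rewrite mem_lcoset invgK mulgA mulKVg mulgA (cSG a) ?groupV ?S_G // -mulgA.
exact: large_sum_free_mulV.
Qed.

End LargeSumFree.

Lemma max_sum_free_nontriv_coset S : max_sum_free G S ->
  exists2 M : {group gT}, maximal M G & S \in nontriv_cosets M G.
Proof.
move=> maxS; have [sfS _] := andP maxS.
have cardS := max_sum_free_card maxS.
have [/set0Pn[s sS] sSG _] := and3P sfS.
have sG : s \in G := subsetP sSG s sS.
pose M := Group (large_sum_free_group_set sfS cardS sS).
have sMG : M \subset G.
  by apply/subsetP=> _ /lcosetP[a aS ->]; rewrite groupM ?groupV ?(subsetP sSG).
have iM : #|G : M| = 3.
  apply/eqP; rewrite -(eqn_pmul2l (_ : 0 < #|M|)) ?cardG_gt0 // Lagrange //.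
  by rewrite /= card_lcoset -cardS mulnC.
exists M; first by apply: p_index_maximal; rewrite ?iM.
apply/imsetP; exists s; last by rewrite /= lcosetKV.
by rewrite inE sG andbT /= mem_lcoset invgK (negPf (sum_free_mul sfS sS sS)).
Qed.

End ElementaryAbelian3.

Lemma pgroup_of_maximal_index (gT : finGroupType) (G : {group gT}) p :
  prime p -> (forall M : {group gT}, maximal M G -> #|G : M| = p) -> p.-group G.
Proof.
move=> pr_p iG; have [P sylP] := Sylow_exists p G.
have [sPG pP p'iP] := and3P sylP.
have [<- // | [M maxM sPM]] := maximal_exists sPG.
have := pnat_dvd (indexgS G sPM) p'iP; rewrite iG //.
by rewrite pnatE // !inE eqxx.
Qed.

Theorem theorem1 (gT : finGroupType) (G : {group gT}) :
  3.-abelem G <->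
  [/\ (forall M : {group gT}, maximal M G ->
         #|nontriv_cosets M G| = 2 /\
         (forall C, C \in nontriv_cosets M G -> max_sum_free G C)),
      (forall S : {set gT}, max_sum_free G S ->
         exists2 M : {group gT}, maximal M G & S \in nontriv_cosets M G)
    & 'Phi(G) = 1].
Proof.
split=> [abG | [maxG _ Phi1]].
  have pG := abelem_pgroup abG; split.
  - move=> M maxM; split=> [|C CM]; last exact (nontriv_coset_max_sum_free abG maxM CM).
    by rewrite card_nontriv_cosets ?(p_maximal_index pG maxM) ?(proper_sub (maxgroupp maxM)).
  - exact: max_sum_free_nontriv_coset abG.
  - by apply/eqP; rewrite (trivg_Phi pG).
have pG : 3.-group G.
  apply: pgroup_of_maximal_index => // M maxM; have [] := maxG M maxM.
  by rewrite card_nontriv_cosets ?(proper_sub (maxgroupp maxM)) //; case: #|G : M| => // n /= ->.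
by rewrite -(trivg_Phi pG) Phi1.
Qed.
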